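(* Consider $T$ rounds in which, in round $1$, each agent $i$ receives her entitlement $e_i$, and in each round $t\ge2$ the allocation $a_t$ is the MMF output for entitlements $e$ and some reported demands $d_{1t},\dots,d_{nt}\ge0$. Let $d^*_{it}\ge0$ be agent $i$'s true demand in round $t$. Then $\sum_{t=1}^T\ell(d^*_t,a_t)\le 1+\sum_{i=1}^n\sum_{t=2}^T(a_{it}-d^*_{it})^++\sum_{i=1}^n\sum_{t=2}^T\mathbf{1}(a_{it}=d_{it})(d^*_{it}-a_{it})^+.$
   Context: A divisible resource of size $1$ is shared by $n$ agents with entitlements $e_i>0$, $\sum_ie_i=1$. MMF$(e,d)$ on reported demands $d_1,\dots,d_n\ge0$: set $r=1$, $E=1$, $S=\{1,\dots,n\}$, $a=0$; process agents $j$ in ascending order of $d_j/e_j$; if $d_j<re_j/E$, set $a_j=d_j$, remove $j$ from $S$, $r\leftarrow r-d_j$, $E\leftarrow E-e_j$ and continue; otherwise set $a_k=re_k/E$ for all $k\in S$ and stop; output $a$. For $d,a\in\mathbb{R}_+^n$: $\ell_{ur}(a)=1-\sum_ia_i$, $\ell_{or}(d,a)=\sum_i(a_i-d_i)^+$, $\ell_{ud}(d,a)=\sum_i(d_i-a_i)^+$, $\ell(d,a)=\min(\ell_{ur}(a)+\ell_{or}(d,a),\ell_{ud}(d,a))$. *)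

From mathcomp Require Import all_boot all_order all_algebra.
Set Implicit Arguments. Unset Strict Implicit. Unset Printing Implicit Defensive.
Import Order.TTheory GRing.Theory Num.Theory.
Local Open Scope ring_scope.

Section MMF.
Variables (R : realFieldType) (n : nat).

Definition pos (x : R) : R := Num.max x 0.

(* One pass of MMF over the remaining (sorted) agents l, with remaining
   resource r and remaining entitlement E.  The remaining set S is exactly l. *)
Fixpoint mmf_aux (e d : 'I_n -> R) (l : seq 'I_n) (r E : R) : 'I_n -> R :=
  match l with
  | [::] => fun _ => 0
  | j :: l' =>
      if d j < r * e j / E then
        fun k => if k == j then d j else mmf_aux e d l' (r - d j) (E - e j) k
      else fun k => if k \in l then r * e k / E else 0
  end.

Definition mmf_order (e d : 'I_n -> R) : seq 'I_n :=
  sort (fun i j => d i / e i <= d j / e j) (enum 'I_n).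

Definition MMF (e d : 'I_n -> R) : 'I_n -> R := mmf_aux e d (mmf_order e d) 1 1.

Definition loss_ur (a : 'I_n -> R) : R := 1 - \sum_i a i.
Definition loss_or (d a : 'I_n -> R) : R := \sum_i pos (a i - d i).
Definition loss_ud (d a : 'I_n -> R) : R := \sum_i pos (d i - a i).
Definition loss (d a : 'I_n -> R) : R :=
  Num.min (loss_ur a + loss_or d a) (loss_ud d a).

End MMF.

From mathcomp Require Import all_boot all_order all_algebra.
Import Order.TTheory GRing.Theory Num.Theory.
Local Open Scope ring_scope.

(* Every MMF allocation either hands out the whole resource, so that its loss
   is at most the over-allocation, or grants every agent exactly her report,
   so that its loss is at most the under-allocation of the agents with
   [a = d].  The round-1 allocation [e] hands out everything and its
   over-allocation is at most [sum e = 1]. *)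

Section Loss.
Context {R : realFieldType} {n : nat}.
Implicit Types (a d : 'I_n -> R).

Lemma pos_ge0 (x : R) : 0 <= pos x.
Proof. by rewrite /pos le_max lexx orbT. Qed.

Lemma pos_subr_le (x y : R) : 0 <= x -> 0 <= y -> pos (x - y) <= x.
Proof. by move=> x0 y0; rewrite /pos ge_max x0 andbT lerBlDr lerDl. Qed.

Lemma loss_or_ge0 d a : 0 <= loss_or d a.
Proof. by apply: sumr_ge0 => i _; apply: pos_ge0. Qed.

Lemma loss_le_or_of_full d a : \sum_i a i = 1 -> loss d a <= loss_or d a.
Proof. by move=> a1; rewrite /loss ge_min /loss_ur a1 subrr add0r lexx. Qed.

Lemma loss_le_ud d a : loss d a <= loss_ud d a.
Proof. by rewrite /loss ge_min lexx orbT. Qed.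

Lemma loss_full_le1 a d : (forall i, 0 <= a i) -> \sum_i a i = 1 ->
  (forall i, 0 <= d i) -> loss d a <= 1.
Proof.
move=> a_ge0 a1 d_ge0; apply: le_trans (loss_le_or_of_full d a a1) _.
by rewrite -a1; apply: ler_sum => i _; apply: pos_subr_le.
Qed.

End Loss.

Section MMFDichotomy.
Variables (R : realFieldType) (n : nat) (e d : 'I_n -> R).
Hypothesis e_gt0 : forall i, 0 < e i.

Lemma mmf_aux_full_or_exact (l : seq 'I_n) (r E : R) :
  uniq l -> E = \sum_(k <- l) e k ->
  \sum_(k <- l) mmf_aux e d l r E k = r \/ {in l, mmf_aux e d l r E =1 d}.
Proof.
elim: l r E => [|j l IH] r E /=; first by right.
case/andP=> jNl l_uniq; rewrite big_cons => E_def.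
case: ifP => _.
  set g := mmf_aux e d l (r - d j) (E - e j).
  have sum_l : \sum_(k <- l) (if k == j then d j else g k) = \sum_(k <- l) g k.
    rewrite big_seq [RHS]big_seq; apply: eq_bigr => k kl.
    by case: eqP => [kj | //]; rewrite -kj kl in jNl.
  have [sum_r | exact_l] := IH (r - d j) (E - e j) l_uniq
    ltac:(by rewrite E_def addrC addKr).
    by left; rewrite big_cons eqxx sum_l sum_r addrC subrK.
  by right=> k; rewrite in_cons; case: eqP => [-> | _ /exact_l].
have E_gt0 : 0 < E.
  by rewrite E_def ltr_pwDl // sumr_ge0 // => k _; apply: ltW.
left; rewrite big_seq (eq_bigr (fun k => r * e k / E)) => [|k -> //].
rewrite -big_seq -mulr_suml -mulr_sumr big_cons -E_def -mulrA.
by rewrite divff ?mulr1 // lt0r_neq0.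
Qed.

Lemma MMF_full_or_exact : \sum_i e i = 1 ->
  \sum_i MMF e d i = 1 \/ MMF e d =1 d.
Proof.
move=> e1; have order_enum : perm_eq (mmf_order e d) (enum 'I_n).
  by rewrite perm_sort.
have order_uniq : uniq (mmf_order e d).
  by rewrite (perm_uniq order_enum) enum_uniq.
have [sum1 | exact_order] := mmf_aux_full_or_exact _ 1 _ order_uniq
    ltac:(by rewrite (perm_big _ order_enum) big_enum e1).
  by left; rewrite (perm_big _ order_enum) big_enum in sum1.
by right=> i; apply: exact_order; rewrite (perm_mem order_enum) mem_enum.
Qed.

Lemma loss_MMF_le (dstar : 'I_n -> R) : \sum_i e i = 1 ->
  loss dstar (MMF e d) <= loss_or dstar (MMF e d)
    + \sum_i ((MMF e d i == d i)%:R * pos (dstar i - MMF e d i)).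
Proof.
move=> e1; have [full | exact] := MMF_full_or_exact e1.
  rewrite ler_wpDr ?loss_le_or_of_full //.
  by apply: sumr_ge0 => i _; rewrite mulr_ge0 ?pos_ge0.
apply: ler_wpDl (loss_or_ge0 _ _) (le_trans (loss_le_ud _ _) _).
by apply: ler_sum => i _; rewrite exact eqxx mul1r.
Qed.

End MMFDichotomy.

Theorem lemma2 (R : realFieldType) (n T : nat) (e : 'I_n -> R)
  (d dstar a : nat -> 'I_n -> R) :
  (forall i, 0 < e i) -> \sum_i e i = 1 ->
  (forall t i, (2 <= t <= T)%N -> 0 <= d t i) ->
  (forall t i, (1 <= t <= T)%N -> 0 <= dstar t i) ->
  a 1%N = e ->
  (forall t, (2 <= t <= T)%N -> a t = MMF e (d t)) ->
  \sum_(1 <= t < T.+1) loss (dstar t) (a t) <=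
    1 + \sum_i \sum_(2 <= t < T.+1) pos (a t i - dstar t i)
      + \sum_i \sum_(2 <= t < T.+1)
          ((a t i == d t i)%:R * pos (dstar t i - a t i)).
Proof.
move=> e_gt0 e1 _ dstar_ge0 a1 a_MMF.
have [-> | T_gt0] := posnP T.
  by rewrite big_geq // !big1 ?addr0 ?ler01 // => i _; rewrite big_geq.
rewrite big_ltn ?ltnS // [X in _ <= 1 + X + _]exchange_big.
rewrite [X in _ <= _ + X]exchange_big -addrA /=.
rewrite -big_split /= lerD //.
  by rewrite a1 loss_full_le1 // => i; [apply: ltW | apply: dstar_ge0].
rewrite !big_nat; apply: ler_sum => t /andP[t2 tT].
by rewrite a_MMF ?t2 //= loss_MMF_le.
Qed.
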